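(* Let $m\geq 2$, $a\geq 1$ be integers and let $S_{ma}$ denote the symmetric group on $[m]\times[a]$, where $[n]=\{1,\dots,n\}$. Define embeddings $f:S_m\to S_{ma}$ by $f(\tau)(i,j)=(\tau(i),j)$ and $g:S_a\to S_{ma}$ by $g(\sigma)(i,j)=(i,\sigma(j))$. If $m=2$ define $h:(\mathbb{Z}/2\mathbb{Z})^a\to S_{2a}$ by $h(\epsilon_1,\dots,\epsilon_a)(i,j)=(i+\epsilon_j,j)$, where $i+\epsilon_j$ is taken in $\{1,2\}$ with $1+\bar0=1$, $1+\bar1=2$, $2+\bar0=2$, $2+\bar1=1$; if $m\geq 3$ set $h=f$. Then $$N_{S_{ma}}(\mathrm{im}(f))=\mathrm{im}(h)\cdot\mathrm{im}(g).$$
   Context: $N_G(H)$ denotes the normalizer of a subgroup $H$ in $G$. *)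

From HB Require Import structures.
From mathcomp Require Import all_boot all_fingroup.
Set Implicit Arguments. Unset Strict Implicit. Unset Printing Implicit Defensive.

(* S_{ma} is {perm 'I_m * 'I_a}; [n] = {1..n} is represented by 'I_n = {0..n-1}. *)

Section Embeddings.
Variables m a : nat.

Definition f_fun (tau : {perm 'I_m}) (p : 'I_m * 'I_a) : 'I_m * 'I_a :=
  (tau p.1, p.2).
Lemma f_fun_inj tau : injective (f_fun tau).
Proof. by move=> [i j] [k l] [/perm_inj -> ->]. Qed.
Definition f_perm (tau : {perm 'I_m}) : {perm 'I_m * 'I_a} := perm (@f_fun_inj tau).

Definition g_fun (sigma : {perm 'I_a}) (p : 'I_m * 'I_a) : 'I_m * 'I_a :=
  (p.1, sigma p.2).
Lemma g_fun_inj sigma : injective (g_fun sigma).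
Proof. by move=> [i j] [k l] [-> /perm_inj ->]. Qed.
Definition g_perm (sigma : {perm 'I_a}) : {perm 'I_m * 'I_a} := perm (@g_fun_inj sigma).

(* For m = 2, rev_ord on 'I_2 is exactly the swap 0 <-> 1 (i.e. 1 <-> 2);
   eps : {ffun 'I_a -> bool} encodes (Z/2Z)^a with true = 1bar. *)
Definition h_fun (eps : {ffun 'I_a -> bool}) (p : 'I_m * 'I_a) : 'I_m * 'I_a :=
  if eps p.2 then (rev_ord p.1, p.2) else p.
Lemma h_fun_inj eps : injective (h_fun eps).
Proof.
move=> [i j] [k l]; rewrite /h_fun /=.
case: (boolP (eps j)) => ej; case: (boolP (eps l)) => el //=.
- move=> E; have E1 := congr1 fst E; have E2 := congr1 snd E; simpl in E1, E2.
  by rewrite -(rev_ordK i) E1 rev_ordK E2.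
- by case=> _ E; subst l; rewrite (negPf el) in ej.
- by case=> _ E; subst l; rewrite (negPf ej) in el.
Qed.
Definition h_perm (eps : {ffun 'I_a -> bool}) : {perm 'I_m * 'I_a} := perm (@h_fun_inj eps).

Definition im_f : {set {perm 'I_m * 'I_a}} := [set f_perm tau | tau : {perm 'I_m}].
Definition im_g : {set {perm 'I_m * 'I_a}} := [set g_perm sigma | sigma : {perm 'I_a}].
Definition im_h : {set {perm 'I_m * 'I_a}} :=
  if m == 2 then [set h_perm eps | eps : {ffun 'I_a -> bool}] else im_f.
End Embeddings.

From mathcomp Require Import all_boot all_fingroup cyclic zify.
Set Implicit Arguments. Unset Strict Implicit. Unset Printing Implicit Defensive.

(* An x normalising im(f) conjugates each f(tau) into some f(tau').  As f(tau')
   preserves the second coordinate and transpositions move any row to any other,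
   x permutes the columns, so x = y * g(sigma) where y(i,j) = (rho_j(i), j) lies
   in the base group (S_m)^a.  Such a y normalises im(f) iff all the rho_j induce
   the same conjugation on S_m, i.e. agree modulo the centre of S_m.  That centre
   is trivial for m >= 3, forcing y = f(rho_j), and is all of S_2 for m = 2,
   where the base group is exactly im(h). *)

Local Open Scope group_scope.

Lemma cent_setT_perm_trivial (T : finType) : 2 < #|T| -> 'C([set: {perm T}]) = 1.
Proof.
move=> T_gt2; apply/trivgP/subsetP => c /centP cC; apply/set1gP/permP => x.
rewrite perm1; apply/eqP/negPn/negP => cx_neq_x.
have /card_gt0P [z] : 0 < #|~: [set x; c x]|.
  by have := cardsC [set x; c x]; have := cards2 x (c x); have := leq_b1 (x != c x); lia.
rewrite !inE negb_or => /andP [z_neq_x z_neq_cx].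
have x_neq_cx : x != c x by rewrite eq_sym.
have := congr1 (fun s : {perm T} => s x) (cC _ (in_setT (tperm x z))).
rewrite !permM tpermL (tpermD x_neq_cx z_neq_cx).
by move/perm_inj=> x_eq_z; rewrite x_eq_z eqxx in z_neq_x.
Qed.

Lemma cent_setT_perm2 : 'C([set: {perm 'I_2}]) = [set: {perm 'I_2}].
Proof.
apply/eqP; rewrite eqEsubset subsetT -abelianE cyclic_abelian //.
by rewrite prime_cyclic // cardsT card_Sn.
Qed.

Lemma ord2P (i : 'I_2) : i = ord0 \/ i = ord_max.
Proof. by case: i => [[|[|k]] lt2]; [left | right |]; rewrite //; apply/val_inj. Qed.

Lemma perm2E (s : {perm 'I_2}) i : s i = if s ord0 == ord0 then i else rev_ord i.
Proof.
have rev0 : rev_ord ord0 = ord_max :> 'I_2 by apply/val_inj.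
have rev1 : rev_ord ord_max = ord0 :> 'I_2 by apply/val_inj.
have s01 : s ord0 != s ord_max by rewrite (inj_eq perm_inj).
by case: (ord2P i) => ->; case: (ord2P (s ord0)) s01 => ->; case: (ord2P (s ord_max)) => -> //.
Qed.

Section ProductPerms.
Variables m a : nat.
Local Notation T := ('I_m * 'I_a)%type.
Implicit Types (tau : {perm 'I_m}) (sigma : {perm 'I_a}) (x y : {perm T}).
Implicit Types (rho : {ffun 'I_a -> {perm 'I_m}}) (eps : {ffun 'I_a -> bool}).

Lemma f_permE tau p : f_perm a tau p = (tau p.1, p.2).
Proof. by rewrite permE. Qed.

Lemma g_permE sigma p : g_perm m sigma p = (p.1, sigma p.2).
Proof. by rewrite permE. Qed.

Lemma h_permE eps p : h_perm m eps p = if eps p.2 then (rev_ord p.1, p.2) else p.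
Proof. by rewrite permE. Qed.

Definition fibre_fun (rho : {ffun 'I_a -> {perm 'I_m}}) (p : T) : T :=
  (rho p.2 p.1, p.2).

Lemma fibre_fun_inj rho : injective (fibre_fun rho).
Proof. by move=> [i j] [k l] [+ jl]; rewrite /= jl => /perm_inj ->. Qed.

Definition fibre_perm rho : {perm T} := perm (@fibre_fun_inj rho).

Definition wr_base : {set {perm T}} := [set fibre_perm rho | rho : {ffun 'I_a -> {perm 'I_m}}].

Lemma fibre_permE rho p : fibre_perm rho p = (rho p.2 p.1, p.2).
Proof. by rewrite permE. Qed.

Lemma wr_baseP y : reflect (forall p, (y p).2 = p.2) (y \in wr_base).
Proof.
apply: (iffP imsetP) => [[rho _ ->] p | y_col]; first by rewrite fibre_permE.
have row_inj j : injective (fun i => (y (i, j)).1).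
  move=> i k /= y_ik; suff /perm_inj [] : y (i, j) = y (k, j) by [].
  by rewrite [y (i, j)]surjective_pairing [y (k, j)]surjective_pairing y_ik !y_col.
exists [ffun j => perm (row_inj j)] => //; apply/permP => -[i j].
by rewrite fibre_permE ffunE permE /= [LHS]surjective_pairing y_col.
Qed.

Lemma norm_im_fP x :
  reflect (forall tau, exists tau', forall p, x (f_perm a tau p) = f_perm a tau' (x p))
          (x \in 'N(im_f m a)).
Proof.
apply: (iffP idP) => [Nx tau | x_f].
  have /imsetP [tau' _ f_tau'] : f_perm a tau ^ x \in im_f m a.
    by rewrite -(normP Nx) memJ_conjg; apply/imsetP; exists tau.
  by exists tau' => p; rewrite -f_tau' permJ.
rewrite inE; apply/subsetP => _ /imsetP [_ /imsetP [tau _ ->] ->].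
have [tau' f_tau'] := x_f tau; apply/imsetP; exists tau' => //.
by apply/permP => p; rewrite -(permKV x p) permJ f_tau'.
Qed.

Lemma norm_im_f_col x i k j : x \in 'N(im_f m a) -> (x (i, j)).2 = (x (k, j)).2.
Proof.
move=> /norm_im_fP/(_ (tperm i k)) [tau' x_f].
by have := x_f (i, j); rewrite !f_permE /= tpermL => ->.
Qed.

Lemma norm_im_f_col_inj x i : x \in 'N(im_f m a) -> injective (fun j => (x (i, j)).2).
Proof.
move=> Nx j j' /= x_jj'.
have := norm_im_f_col (x (i, j)).1 (x (i, j')).1 (x (i, j)).2 (groupVr Nx).
by rewrite -surjective_pairing x_jj' -surjective_pairing !permK.
Qed.

Lemma norm_im_f_split (m_gt0 : 0 < m) x : x \in 'N(im_f m a) ->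
  exists sigma, x * (g_perm m sigma)^-1 \in wr_base.
Proof.
move=> Nx; pose i0 := Ordinal m_gt0.
exists (perm (norm_im_f_col_inj (i := i0) Nx)); apply/wr_baseP => -[i j].
rewrite permM; set sigma := perm _.
have -> : x (i, j) = g_perm m sigma ((x (i, j)).1, j).
  by rewrite g_permE permE /= -(norm_im_f_col i i0 j Nx) -surjective_pairing.
by rewrite -permM mulgV perm1.
Qed.

Lemma im_f_wr_base : im_f m a \subset wr_base.
Proof. by apply/subsetP => _ /imsetP [tau _ ->]; apply/wr_baseP => p; rewrite f_permE. Qed.

Lemma im_f_norm : im_f m a \subset 'N(im_f m a).
Proof.
apply/subsetP => _ /imsetP [r _ ->]; apply/norm_im_fP => tau; exists (tau ^ r) => p.
by rewrite !f_permE /= permJ.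
Qed.

Lemma im_g_norm : im_g m a \subset 'N(im_f m a).
Proof.
apply/subsetP => _ /imsetP [sigma _ ->]; apply/norm_im_fP => tau; exists tau => p.
by rewrite !(f_permE, g_permE).
Qed.

Lemma norm_fibre_perm rho tau : fibre_perm rho \in 'N(im_f m a) ->
  exists tau', forall j, tau ^ rho j = tau'.
Proof.
move=> /norm_im_fP/(_ tau) [tau' rho_f]; exists tau' => j.
apply/permP => i; rewrite -(permKV (rho j) i) permJ.
by have := rho_f ((rho j)^-1 i, j); rewrite !(f_permE, fibre_permE) => -[].
Qed.

Lemma norm_fibre_perm_cent rho j k : fibre_perm rho \in 'N(im_f m a) ->
  rho j * (rho k)^-1 \in 'C([set: {perm 'I_m}]).
Proof.
move=> Nrho; apply/centP => tau _; apply/commute_sym/commgP/conjg_fixP.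
have [tau' rho_tau'] := norm_fibre_perm tau Nrho.
by rewrite conjgM rho_tau' -(rho_tau' k) conjgK.
Qed.

Lemma cent_fibre_perm_norm rho : (forall j, rho j \in 'C([set: {perm 'I_m}])) ->
  fibre_perm rho \in 'N(im_f m a).
Proof.
move=> rho_cent; apply/norm_im_fP => tau; exists tau => -[i j].
by rewrite !(f_permE, fibre_permE) /= -!permM (centP (rho_cent j) tau (in_setT tau)).
Qed.

Lemma norm_fibre_perm_const (m_gt2 : 2 < m) rho j k : fibre_perm rho \in 'N(im_f m a) ->
  rho j = rho k.
Proof.
move=> /(norm_fibre_perm_cent j k); rewrite cent_setT_perm_trivial ?card_ord // => /set1gP.
by move/eqP; rewrite -eq_mulgV1 => /eqP.
Qed.

Lemma norm_wr_base_im_f (m_gt2 : 2 < m) (a_gt0 : 0 < a) : 'N(im_f m a) :&: wr_base = im_f m a.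
Proof.
apply/eqP; rewrite eqEsubset subsetI im_f_norm im_f_wr_base !andbT.
apply/subsetP => x /setIP [Nx /imsetP [rho _ x_def]]; rewrite x_def in Nx *.
apply/imsetP; exists (rho (Ordinal a_gt0)) => //; apply/permP => -[i j].
by rewrite fibre_permE f_permE (norm_fibre_perm_const m_gt2 j (Ordinal a_gt0) Nx).
Qed.

End ProductPerms.

Lemma im_h2_wr_base a : im_h 2 a = wr_base 2 a.
Proof.
apply/eqP; rewrite eqEsubset; apply/andP; split; apply/subsetP => _ /imsetP [x _ ->].
  by apply/wr_baseP => p; rewrite h_permE; case: ifP.
apply/imsetP; exists [ffun j => x j ord0 != ord0] => //; apply/permP => -[i j].
by rewrite fibre_permE h_permE ffunE perm2E /=; case: ifP.
Qed.

Lemma wr_base2_norm a : wr_base 2 a \subset 'N(im_f 2 a).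
Proof.
apply/subsetP => _ /imsetP [rho _ ->]; apply: cent_fibre_perm_norm => j.
by rewrite cent_setT_perm2 inE.
Qed.

Lemma norm_wr_base_im_h m a : 2 <= m -> 0 < a -> 'N(im_f m a) :&: wr_base m a = im_h m a.
Proof.
rewrite leq_eqVlt => /orP [/eqP <- _ | m_gt2 a_gt0].
  by rewrite im_h2_wr_base; apply/setIidPr/wr_base2_norm.
by rewrite /im_h gtn_eqF // norm_wr_base_im_f.
Qed.

Theorem lemma4p3 (m a : nat) (hm : 2 <= m) (ha : 1 <= a) :
  ('N(im_f m a) = im_h m a * im_g m a)%g.
Proof.
rewrite -(norm_wr_base_im_h hm ha); apply/eqP.
rewrite eqEsubset mul_subG ?subsetIl ?im_g_norm // andbT.
apply/subsetP => x Nx; have [sigma x_sigma] := norm_im_f_split (ltnW hm) Nx.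
have g_sigma : g_perm m sigma \in im_g m a by apply/imsetP; exists sigma.
rewrite -(mulgKV (g_perm m sigma) x) mem_mulg // inE x_sigma andbT.
by rewrite groupM ?groupV // (subsetP (im_g_norm m a)).
Qed.
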